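(* Let $p$ be a prime, $A=\{0,1,\dots,p-1\}$ viewed as $\mathbb Z_p$, $n\ge3$, and let $\rho\subseteq A^n$ have full pattern and satisfy $$\{(x_1,\dots,x_n)\in A^n:\ x_1+\dots+x_n\equiv0\pmod p\}\subsetneq\rho.$$ Then $\rho=A^n$.
   Context: The pattern of $\rho\subseteq A^n$: for $i\ne j$, $i\overset{\rho}{\sim}j$ iff there do NOT exist $a_1,\dots,a_n,b_i,b_j\in A$ with $(a_1,\dots,a_n)\notin\rho$ while the tuples obtained by replacing $a_i$ by $b_i$, replacing $a_j$ by $b_j$, and replacing both, all lie in $\rho$. The pattern is full if $i\overset{\rho}{\sim}j$ for all $i,j\in\{1,\dots,n\}$. *)

From mathcomp Require Import all_boot.
Set Implicit Arguments. Unset Strict Implicit. Unset Printing Implicit Defensive.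

Definition upd (p n : nat) (a : {ffun 'I_n -> 'I_p}) (i : 'I_n) (b : 'I_p)
  : {ffun 'I_n -> 'I_p} := [ffun k => if k == i then b else a k].

Definition pattern_rel (p n : nat) (rho : {set {ffun 'I_n -> 'I_p}})
  (i j : 'I_n) : Prop :=
  ~ exists (a : {ffun 'I_n -> 'I_p}) (bi bj : 'I_p),
      [/\ a \notin rho, upd a i bi \in rho, upd a j bj \in rho
        & upd (upd a i bi) j bj \in rho].

Definition full_pattern (p n : nat) (rho : {set {ffun 'I_n -> 'I_p}}) : Prop :=
  forall i j : 'I_n, i != j -> pattern_rel rho i j.

Definition sum_zero_rel (p n : nat) : {set {ffun 'I_n -> 'I_p}} :=
  [set x : {ffun 'I_n -> 'I_p} | (\sum_(k < n) (x k : nat)) %% p == 0].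

(* A transfer moves an amount d from one coordinate of a tuple over Z_p to
   another and preserves the coordinate sum.  Full pattern makes rho closed
   under completing "rectangles": if
   y, y + a e_i, y + b e_j are in rho (i <> j), so is y + a e_i + b e_j.
   Rectangles with zero-sum corners, using a third coordinate, show that a tuple
   x of rho may transfer its own sum t between any two coordinates; iterating,
   and since t generates Z_p when t <> 0, it may transfer any amount, so the
   whole fiber of t lies in rho.  One more rectangle shows that the sums whose
   fibers lie in rho are closed under addition; they contain 0 and t, hence all
   of Z_p. *)

From mathcomp Require Import all_boot all_algebra ring.
Import GRing.Theory.

Set Implicit Arguments.
Unset Strict Implicit.
Unset Printing Implicit Defensive.

Local Open Scope ring_scope.

Section Update.
Variables p n : nat.
Implicit Types (x : {ffun 'I_n -> 'I_p}) (i j : 'I_n).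

Lemma upd_ne x i b k : k != i -> upd x i b k = x k.
Proof. by rewrite ffunE => /negbTE ->. Qed.

Lemma upd_id x i : upd x i (x i) = x.
Proof. by apply/ffunP => k; rewrite ffunE; case: eqP => [->|]. Qed.

Lemma updK x i a b : upd (upd x i a) i b = upd x i b.
Proof. by apply/ffunP => k; rewrite !ffunE; case: eqP. Qed.

Lemma updC x i j a b : i != j -> upd (upd x i a) j b = upd (upd x j b) i a.
Proof.
move=> ij; apply/ffunP => k; rewrite !ffunE.
by case: (eqVneq k j) => [->|//]; rewrite eq_sym (negbTE ij).
Qed.

Lemma pattern_rel_rect (rho : {set {ffun 'I_n -> 'I_p}}) i j y a b :
  i != j -> pattern_rel rho i j ->
  y \in rho -> upd y i a \in rho -> upd y j b \in rho ->
  upd (upd y i a) j b \in rho.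
Proof.
move=> ij rel_ij y_rho yi_rho yj_rho; apply/negPn/negP => yij_rho; apply: rel_ij.
exists (upd (upd y i a) j b), (y i), (y j); split => //.
- by rewrite updC 1?eq_sym // updK upd_id.
- by rewrite updK -(@upd_ne y i a j) 1?eq_sym // upd_id.
- suff -> : upd (upd (upd (upd y i a) j b) i (y i)) j (y j) = y by [].
  apply/ffunP => k; rewrite !ffunE.
  by case: (eqVneq k j) => [->//|_]; case: (eqVneq k i) => [->|].
Qed.

End Update.

Section Tuples.
Variables q n : nat.
Local Notation T := {ffun 'I_n -> 'I_q.+2}.
Implicit Types (x y r : T) (i j k : 'I_n) (a b d : 'I_q.+2).

Definition delta i a : T := [ffun l => if l == i then a else 0].

Definition tsum x : 'I_q.+2 := \sum_(l < n) x l.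

Lemma deltaE i a l : delta i a l = if l == i then a else 0.
Proof. by rewrite ffunE. Qed.

Lemma delta0 i : delta i 0 = 0.
Proof. by apply/ffunP => l; rewrite !ffunE; case: eqP. Qed.

Lemma deltaD i a b : delta i (a + b) = delta i a + delta i b.
Proof. by apply/ffunP => l; rewrite !ffunE; case: eqP; rewrite ?addr0. Qed.

Lemma updE x i b : upd x i b = x + delta i (b - x i).
Proof.
apply/ffunP => l; rewrite !ffunE.
by case: eqP => [->|_]; rewrite ?addr0 // addrC subrK.
Qed.

Lemma upd_addE x i a : upd x i (x i + a) = x + delta i a.
Proof. by rewrite updE (addrC (x i)) addrK. Qed.

Lemma tsumD x y : tsum (x + y) = tsum x + tsum y.
Proof. by rewrite /tsum -big_split; apply: eq_bigr => l _; rewrite ffunE. Qed.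

Lemma tsumB x y : tsum (x - y) = tsum x - tsum y.
Proof. by rewrite /tsum -sumrB; apply: eq_bigr => l _; rewrite !ffunE. Qed.

Lemma tsum_delta i a : tsum (delta i a) = a.
Proof.
rewrite /tsum (bigD1 i) //= big1 => [|l /negbTE li]; rewrite deltaE ?eqxx ?addr0 //.
by rewrite li.
Qed.

Lemma sum_zero_relE x : (x \in sum_zero_rel q.+2 n) = (tsum x == 0).
Proof.
have val_sig : val (tsum x) = ((\sum_(l < n) (x l : nat)) %% q.+2)%N.
  by rewrite /tsum; elim/big_rec2: _ => [|l s t _ IH] //=; rewrite IH modnDmr.
by rewrite inE -val_sig.
Qed.

Lemma tsum_eq_second_diff x y i :
  tsum x = tsum y -> x i != y i -> exists2 k, k != i & x k != y k.
Proof.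
move=> sig_xy xy_i; apply/exists_inP; apply: contraLR xy_i => /exists_inPn same.
have x_eq : x = y + delta i (x i - y i).
  apply/ffunP => l; rewrite !ffunE.
  by case: (eqVneq l i) => [->|/same/negPn/eqP ->]; rewrite ?addr0 // addrC subrK.
move: sig_xy; rewrite {1}x_eq tsumD tsum_delta -{2}[tsum y]addr0.
by move/addrI/eqP; rewrite subr_eq0 negbK.
Qed.

Definition transfer x i k d := x + delta i (- d) + delta k d.

Lemma transfer0 x i k : transfer x i k 0 = x.
Proof. by rewrite /transfer oppr0 !delta0 !addr0. Qed.

Lemma transferD x i k d e :
  transfer (transfer x i k d) i k e = transfer x i k (d + e).
Proof.
rewrite /transfer opprD !deltaD -!addrA; congr (_ + (_ + _)).
by rewrite addrCA.
Qed.

Lemma tsum_transfer x i k d : tsum (transfer x i k d) = tsum x.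
Proof. by rewrite !tsumD !tsum_delta subrK. Qed.

(* Each transfer fixing a coordinate where [y] and [r] differ shrinks their
   difference set; [tsum_eq_second_diff] provides the coordinate to absorb it. *)
Lemma transfer_closed_tsum (P : pred T) :
  (forall y i k d, i != k -> P y -> P (transfer y i k d)) ->
  forall y r, P y -> tsum r = tsum y -> P r.
Proof.
move=> closedP y r; have [m] := ubnP #|[set l | y l != r l]|.
elim: m y => // m IH y; rewrite ltnS => diff_le Py sig_ry.
case: (pickP [pred l | y l != r l]) => [i /= yr_i|same]; last first.
  suff <- : y = r by [].
  by apply/ffunP => l; apply/eqP; move/negbFE: (same l).
have [k ki yr_k] := tsum_eq_second_diff (esym sig_ry) yr_i.
set y' := transfer y i k (y i - r i).
apply: (IH y'); last by rewrite tsum_transfer.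
- apply: leq_trans diff_le; apply: proper_card; apply/properP; split.
    apply/subsetP => l; rewrite !inE /y' /transfer !ffunE.
    case: (eqVneq l i) => [-> _ //|_]; case: (eqVneq l k) => [-> _ //|_].
    by rewrite !addr0.
  exists i; rewrite !inE // /y' /transfer !ffunE eqxx.
  rewrite eq_sym in ki; rewrite (negbTE ki).
  by rewrite addr0 opprB subrKC negbK.
- by apply: closedP Py; rewrite eq_sym.
Qed.

End Tuples.

Lemma exists_neq2 n (i k : 'I_n) :
  (2 < n)%N -> exists j : 'I_n, (j != i) && (j != k).
Proof.
move=> n_gt2; apply/existsP; apply: contraLR n_gt2 => /existsPn none.
rewrite -leqNgt -{1}(card_ord n); apply: (@leq_trans #|[set i; k]|).
  apply/subset_leq_card/subsetP => j _; rewrite !inE.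
  by move: (none j); rewrite negb_and !negbK.
by rewrite cards2; case: (i != k).
Qed.

Lemma Zp_mulrn_onto q (t d : 'I_q.+2) :
  prime q.+2 -> t != 0 -> exists m, t *+ m = d.
Proof.
move=> p_prime t_neq0.
have t_unit : t \is a GRing.unit.
  have := unitZpE (p := q.+2) t isT; rewrite natr_Zp => ->.
  rewrite prime_coprime // gtnNdvd // lt0n.
  by apply: contra t_neq0 => /eqP t0; apply/eqP/val_inj.
by exists (val (t^-1 * d)); rewrite -mulr_natr natr_Zp mulrA mulrV // mul1r.
Qed.

Section SumZeroExtension.
Variables (q n : nat) (rho : {set {ffun 'I_n -> 'I_q.+2}}).

Definition fiber_sub s := forall r, tsum r = s -> r \in rho.

Hypotheses (p_prime : prime q.+2) (n_gt2 : (2 < n)%N)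
  (rho_full : full_pattern rho) (rho_fiber0 : fiber_sub 0).

Lemma rho_rect y i j a b : i != j ->
  y \in rho -> y + delta i a \in rho -> y + delta j b \in rho ->
  y + delta i a + delta j b \in rho.
Proof.
move=> ij y_rho; rewrite -!upd_addE => yi_rho yj_rho.
have yij : (y + delta i a) j = y j by rewrite !ffunE eq_sym (negbTE ij) addr0.
have := pattern_rel_rect ij (rho_full ij) y_rho yi_rho yj_rho.
by rewrite upd_addE -yij upd_addE.
Qed.

Lemma rho_cancel_tsum x i j : i != j -> x \in rho ->
  x + delta i (- tsum x) + delta j (- tsum x) \in rho.
Proof.
move=> ij x_rho; apply: rho_rect => //;
  by apply: rho_fiber0; rewrite tsumD tsum_delta subrr.
Qed.

(* Cancel the sum at i and at a third coordinate j, then undo it at j while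
   cancelling the (now negated) sum at k. *)
Lemma rho_transfer_tsum x i k :
  i != k -> x \in rho -> transfer x i k (tsum x) \in rho.
Proof.
move=> ik x_rho; have [j /andP [ji jk]] := exists_neq2 i k n_gt2.
have ij : i != j by rewrite eq_sym.
set t := tsum x.
have w_rho := rho_cancel_tsum ij x_rho; rewrite -/t in w_rho.
have sig_w : tsum (x + delta i (- t) + delta j (- t)) = - t.
  by rewrite !tsumD !tsum_delta subrr add0r.
have := rho_cancel_tsum jk w_rho; rewrite sig_w opprK.
suff -> : x + delta i (- t) + delta j (- t) + delta j t = x + delta i (- t) by [].
by rewrite -addrA -deltaD addNr delta0 addr0.
Qed.

Lemma rho_transfer x i k d : i != k -> x \in rho -> tsum x != 0 ->
  transfer x i k d \in rho.
Proof.
move=> ik x_rho sig_x; have [m <-] := Zp_mulrn_onto d p_prime sig_x.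
elim: m => [|m IH]; first by rewrite mulr0n transfer0.
have := rho_transfer_tsum ik IH; rewrite tsum_transfer transferD.
by rewrite mulrSr.
Qed.

Lemma fiber_sub_tsum x : x \in rho -> tsum x != 0 -> fiber_sub (tsum x).
Proof.
move=> x_rho sig_x r sig_r.
pose P := [pred y | (y \in rho) && (tsum y != 0)].
have closedP y i k d : i != k -> P y -> P (transfer y i k d).
  move=> ik /andP [y_rho sig_y].
  by rewrite /P /= tsum_transfer sig_y andbT rho_transfer.
have Px : P x by rewrite /P /= x_rho sig_x.
by case/andP: (transfer_closed_tsum closedP Px sig_r).
Qed.

Lemma fiber_subD a b : fiber_sub a -> fiber_sub b -> fiber_sub (a + b).
Proof.
move=> rho_a rho_b r sig_r.
have i : 'I_n := Ordinal (ltnW (ltnW n_gt2)).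
have [j /andP [ji _]] := exists_neq2 i i n_gt2.
set y := r - delta i a - delta j b.
have sig_y : tsum y = 0 by rewrite !tsumB sig_r !tsum_delta; ring.
have <- : y + delta i a + delta j b = r by rewrite addrAC !subrK.
apply: rho_rect; rewrite 1?eq_sym //; first exact: rho_fiber0.
  by apply: rho_a; rewrite tsumD sig_y tsum_delta add0r.
by apply: rho_b; rewrite tsumD sig_y tsum_delta add0r.
Qed.

Lemma rho_eq_setT c :
  c \in rho -> tsum c != 0 -> rho = [set: {ffun 'I_n -> 'I_q.+2}].
Proof.
move=> c_rho sig_c.
have fiber_mulrn m : fiber_sub (tsum c *+ m).
  elim: m => [|m IH]; first by rewrite mulr0n.
  by rewrite mulrSr; apply: fiber_subD IH (fiber_sub_tsum c_rho sig_c).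
apply/setP => r; rewrite inE.
have [m sig_r] := Zp_mulrn_onto (tsum r) p_prime sig_c.
exact: fiber_mulrn m r (esym sig_r).
Qed.

End SumZeroExtension.

Local Close Scope ring_scope.

Theorem mainTheorem17 (p n : nat) (rho : {set {ffun 'I_n -> 'I_p}}) :
  prime p -> 3 <= n -> full_pattern rho ->
  sum_zero_rel p n \proper rho ->
  rho = [set: {ffun 'I_n -> 'I_p}].
Proof.
case: p rho => [|[|q]] rho // p_prime n_gt2 rho_full.
case/properP => sub_rho [c c_rho c_out].
apply: (rho_eq_setT p_prime n_gt2 rho_full _ c_rho).
  by move=> x sig_x; apply: (subsetP sub_rho); rewrite sum_zero_relE sig_x.
by rewrite -sum_zero_relE.
Qed.
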